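(* Let $n\ge 3$ and $m,k\ge 1$ be integers, let $t,u\in\mathbb{Z}_n$, and let $G_n(t,u)$ denote the set of all $m\times k$ matrices with entries in $\mathbb{Z}_n$ equipped with the binary operation $[a_{ij}]*[b_{ij}]=[(t a_{ij}+u b_{ij}) \bmod n]$. If $t^2\equiv u \pmod n$, then $(G_n(t,u),* )$ is an AG-groupoid, i.e. it satisfies the left invertive law $(A*B)*C=(C*B)*A$ for all $A,B,C\in G_n(t,u)$.
   Context: An AG-groupoid (Abel-Grassmann's groupoid, or left almost semigroup) is a set with a binary operation $*$ satisfying the left invertive law $(a*b)*c=(c*b)*a$ for all elements $a,b,c$. *)

From HB Require Import structures.
From mathcomp Require Import all_boot all_order all_algebra.
Set Implicit Arguments. Unset Strict Implicit. Unset Printing Implicit Defensive.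
Import GRing.Theory.
Local Open Scope ring_scope.

Definition Gop (n m k : nat) (t u : 'Z_n) (A B : 'M['Z_n]_(m, k)) : 'M['Z_n]_(m, k) :=
  \matrix_(i < m, j < k) (t * A i j + u * B i j).

Definition left_invertive_law (T : Type) (op : T -> T -> T) : Prop :=
  forall a b c : T, op (op a b) c = op (op c b) a.

From mathcomp Require Import all_boot all_order all_algebra.
From mathcomp Require Import ring.
Import GRing.Theory.
Local Open Scope ring_scope.

(* Both sides expand to t^3 a + t u b + u c and t^3 c + t u b + u a, which agree once u = t^2. *)
Lemma left_invertive_affine (R : comRingType) (t u : R) : t ^+ 2 = u ->
  left_invertive_law (fun a b : R => t * a + u * b).
Proof. by move=> <- a b c; ring. Qed.

Theorem mainTheorem1 (n m k : nat) (hn : (3 <= n)%N) (hm : (1 <= m)%N) (hk : (1 <= k)%N)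
  (t u : 'Z_n) (htu : t ^+ 2 = u) :
  left_invertive_law (@Gop n m k t u).
Proof.
move=> A B C; apply/matrixP => i j; rewrite !mxE.
exact: left_invertive_affine.
Qed.
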